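(* Let $F=\{F^{(1)},\ldots,F^{(k)}\}$ be an SNRE of degree $(d,k)$. There exists an algorithm which, given $F$ (i.e. the coefficients of the polynomials $F^{(1)},\ldots,F^{(k)}$), determines the set $\mathcal{E}(F)$ of essential symbols and the set $\mathcal{I}(F)$ of inessential symbols, and this algorithm halts within $k$ steps.
   Context: An SNRE of degree $(d,k)$ consists of $k$ nonzero homogeneous polynomials $F^{(1)},\ldots,F^{(k)}$ of degree $d$ in $k$ variables $x_1,\dots,x_k$ with nonnegative integer coefficients, together with the sequences defined by $\gamma_{i;0}=1$ and $\gamma_{i;n}=F^{(i)}(\gamma_{1;n-1},\ldots,\gamma_{k;n-1})$ for $n\ge1$ (the symbols are $1,\dots,k$). Symbol $i$ induces $j$ ($i\to j$) if $x_j$ occurs in some monomial of $F^{(i)}$ with nonzero coefficient. A symbol $i$ is essential if $\gamma_{i;n}\ge 2$ for some $n\in\mathbb{N}$ and inessential otherwise (i.e. $\gamma_{i;n}=1$ for all $n$); $\mathcal{E}(F)$ and $\mathcal{I}(F)$ denote the sets of essential and inessential symbols. *)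

From HB Require Import structures.
From mathcomp Require Import all_boot all_order all_algebra.
From mathcomp Require Import mpoly.
Set Implicit Arguments. Unset Strict Implicit. Unset Printing Implicit Defensive.
Import Order.TTheory GRing.Theory Num.Theory.
Local Open Scope ring_scope.

Definition is_SNRE (d k : nat) (F : 'I_k -> {mpoly int[k]}) : Prop :=
  forall i : 'I_k,
    [/\ F i != 0, F i \is d.-homog & forall m : 'X_{1..k}, 0 <= (F i)@_m].

Fixpoint gamma (k : nat) (F : 'I_k -> {mpoly int[k]}) (n : nat) : 'I_k -> int :=
  match n with
  | 0%N => fun _ => 1
  | n'.+1 => fun i => (F i).@[gamma F n']
  end.

Definition essential (k : nat) (F : 'I_k -> {mpoly int[k]}) (i : 'I_k) : Prop :=
  exists n : nat, 2 <= gamma F n i.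

Definition inessential (k : nat) (F : 'I_k -> {mpoly int[k]}) (i : 'I_k) : Prop :=
  forall n : nat, gamma F n i = 1.

From mathcomp Require Import all_boot all_order all_algebra.
From mathcomp Require Import mpoly zify.
Set Implicit Arguments. Unset Strict Implicit. Unset Printing Implicit Defensive.
Import Order.TTheory GRing.Theory Num.Theory.
Local Open Scope ring_scope.

(* All gamma_{i;n} are >= 1 and nondecreasing in n, so the sets of symbols that
   are essential by time n increase.  A nonnegative integer polynomial takes the
   value 1 at a point >= 1 only if it is a single monomial with coefficient 1 in
   variables equal to 1 there, so whether gamma_{i;n+1} = 1 depends only on the
   set of j with gamma_{j;n} = 1.  Hence the increasing chain of essential sets
   is constant as soon as it stalls once; as it lives in the k symbols, it is
   constant from step k on. *)

Section OrderedProducts.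
Variable R : numDomainType.

Lemma mulr_ege1_eq1 (x y : R) : 1 <= x -> 1 <= y -> x * y = 1 -> x = 1 /\ y = 1.
Proof.
move=> x_ge1 y_ge1 xy1.
have x1 : x = 1.
  apply/le_anti; rewrite x_ge1 andbT -xy1.
  by apply: ler_peMr => //; apply: le_trans x_ge1.
by split=> //; rewrite -xy1 x1 mul1r.
Qed.

Lemma prodr_ege1 (I : Type) (r : seq I) (P : pred I) (E : I -> R) :
  (forall i, P i -> 1 <= E i) -> 1 <= \prod_(i <- r | P i) E i.
Proof. by move=> E_ge1; elim/big_ind: _ => // x y; apply: mulr_ege1. Qed.

Lemma prodr_ege1_eq1 (I : finType) (E : I -> R) :
  (forall i, 1 <= E i) -> \prod_i E i = 1 -> forall i, E i = 1.
Proof.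
move=> E_ge1 prod1 i; move: prod1; rewrite (bigD1 i) //=.
by case/mulr_ege1_eq1 => //; apply: prodr_ege1.
Qed.

Lemma sumr_ege1_eq1 (I : eqType) (r : seq I) (E : I -> R) :
  (forall i, i \in r -> 1 <= E i) -> \sum_(i <- r) E i = 1 ->
  exists2 i, r = [:: i] & E i = 1.
Proof.
case: r => [|i [|j s]] E_ge1; rewrite ?big_nil ?big_seq1 ?big_cons.
- by move/eqP; rewrite eq_sym oner_eq0.
- by exists i.
have s_ge0 : 0 <= \sum_(l <- s) E l.
  rewrite big_seq sumr_ge0 // => l s_l.
  by rewrite (le_trans ler01) // E_ge1 // !inE s_l !orbT.
have two_le : 1 + 1 <= E i + (E j + \sum_(l <- s) E l).
  by rewrite lerD ?E_ge1 ?mem_head // -[1]addr0 lerD ?E_ge1 // !inE eqxx orbT.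
by move=> sum1; move: two_le; rewrite sum1 gerDl ler10.
Qed.

End OrderedProducts.

Section NonnegativePolynomials.
Variable n : nat.

Definition mpoly_nonneg (R : numDomainType) (p : {mpoly R[n]}) :=
  forall m, 0 <= p@_m.

Lemma meval_ler (R : numDomainType) (p : {mpoly R[n]}) (x y : 'I_n -> R) :
  mpoly_nonneg p -> (forall i, 0 <= x i <= y i) -> p.@[x] <= p.@[y].
Proof.
move=> p_ge0 le_xy; rewrite !mevalE; apply: ler_sum => m _.
apply: ler_wpM2l => //; apply: ler_prod => i _.
have /andP[x_ge0 x_le_y] := le_xy i.
by rewrite exprn_ge0 //= lerXn2r // nnegrE // (le_trans x_ge0).
Qed.

Implicit Types (p : {mpoly int[n]}) (x y : 'I_n -> int).

Lemma mcoeff_ege1 p m : mpoly_nonneg p -> m \in msupp p -> 1 <= p@_m.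
Proof.
by move=> p_ge0 supp_m; rewrite -gtz0_ge1 lt_def -mcoeff_msupp supp_m p_ge0.
Qed.

Lemma mterm_ege1 p x m :
  mpoly_nonneg p -> m \in msupp p -> (forall i, 1 <= x i) ->
  1 <= p@_m * \prod_i x i ^+ m i.
Proof.
move=> p_ge0 supp_m x_ge1; rewrite mulr_ege1 ?mcoeff_ege1 //.
by apply: prodr_ege1 => i _; apply: exprn_ege1.
Qed.

Lemma meval_ege1 p x : p != 0 -> mpoly_nonneg p -> (forall i, 1 <= x i) ->
  1 <= p.@[x].
Proof.
move=> p_neq0 p_ge0 x_ge1; rewrite mevalE.
have term_ge1 m : m \in msupp p -> 1 <= p@_m * \prod_i x i ^+ m i.
  by move=> supp_m; apply: mterm_ege1.
have := mlead_supp p_neq0; case: (msupp p) term_ge1 => // m s term_ge1 _.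
rewrite big_cons (le_trans (term_ge1 m (mem_head _ _))) // lerDl.
rewrite big_seq sumr_ge0 // => m' s_m'.
by rewrite (le_trans ler01) // term_ge1 // inE s_m' orbT.
Qed.

Lemma meval_eq1 p x y : mpoly_nonneg p -> (forall i, 1 <= x i) ->
  (forall i, x i = 1 -> y i = 1) -> p.@[x] = 1 -> p.@[y] = 1.
Proof.
move=> p_ge0 x_ge1 xy1; rewrite !mevalE.
case/sumr_ege1_eq1 => [m supp_m | m supp_p]; first exact: mterm_ege1.
rewrite supp_p big_cons big_nil addr0 => /mulr_ege1_eq1[].
- by apply: mcoeff_ege1; rewrite // supp_p mem_head.
- by apply: prodr_ege1 => i _; apply: exprn_ege1.
move=> c1 prod1; rewrite c1 mul1r big1 // => i _.
have /eqP : x i ^+ m i = 1.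
  by apply: (prodr_ege1_eq1 _ prod1) => j; apply: exprn_ege1.
by rewrite pexprn_eq1 ?(le_trans ler01) // => /orP[/eqP -> | /eqP /xy1 ->];
  rewrite ?expr0 ?expr1n.
Qed.

End NonnegativePolynomials.

Section StallingChains.
Local Open Scope nat_scope.
Variables (T : finType) (S : nat -> {set T}).
Hypothesis S_subS : forall n, S n \subset S n.+1.
Hypothesis S_stall : forall n, S n = S n.+1 -> S n.+1 = S n.+2.

Lemma chain_subset : {homo S : i j / (i <= j) >-> i \subset j}.
Proof.
exact: homo_leq (fun A => subxx A) (fun B A C => @subset_trans _ A B C) S_subS.
Qed.

Lemma chain_const_from j : S j = S j.+1 -> forall m, j <= m -> S m = S j.
Proof.
move=> Sj; have stall l : S (j + l) = S (j + l).+1.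
  by elim: l => [|l IHl]; rewrite ?addn0 // addnS S_stall.
move=> m /subnKC <-; elim: (m - j) => [|l IHl]; first by rewrite addn0.
by rewrite addnS -stall.
Qed.

Lemma chain_card_ge n : (forall j, j < n -> S j != S j.+1) -> n <= #|S n|.
Proof.
elim: n => // n IHn strict; apply: leq_ltn_trans (IHn _) (proper_card _).
  by move=> j ltjn; apply: strict; apply: ltnW.
by rewrite properEneq S_subS strict.
Qed.

Lemma chain_stationary m : #|T| <= m -> S m = S #|T|.
Proof.
move=> le_Tm; case: (boolP [exists j : 'I_#|T|, S j == S j.+1]).
  case/existsP=> j /eqP Sj.
  have le_jT : j <= #|T| := ltnW (ltn_ord j).
  by rewrite !(chain_const_from Sj) // (leq_trans le_jT).
move/existsPn=> strict; have full : S #|T| = setT.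
  apply/eqP; rewrite eqEcard subsetT cardsT chain_card_ge // => j ltjT.
  exact: (strict (Ordinal ltjT)).
by apply/eqP; rewrite full eqEsubset subsetT -full chain_subset.
Qed.

End StallingChains.

Section SNRE.
Variables (d k : nat) (F : 'I_k -> {mpoly int[k]}).

Definition essential_by n : {set 'I_k} := [set i | gamma F n i != 1].

Lemma gamma_eq1E n i : (gamma F n i == 1) = (i \notin essential_by n).
Proof. by rewrite inE negbK. Qed.

Hypothesis F_SNRE : is_SNRE d F.

Lemma SNRE_nonneg i : mpoly_nonneg (F i).
Proof. by have [_ _] := F_SNRE i. Qed.

Lemma gamma_ege1 n i : 1 <= gamma F n i.
Proof.
elim: n i => // n IHn i; have [F_neq0 _ _] := F_SNRE i.
exact: meval_ege1 F_neq0 (SNRE_nonneg i) IHn.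
Qed.

Lemma gamma_le_succ n i : gamma F n i <= gamma F n.+1 i.
Proof.
elim: n i => [|n IHn] i; first exact: gamma_ege1.
apply: meval_ler (SNRE_nonneg i) _ => j.
by rewrite IHn andbT (le_trans ler01) ?gamma_ege1.
Qed.

Lemma mem_essential_by n i : (i \in essential_by n) = (2 <= gamma F n i).
Proof. by rewrite inE; have := gamma_ege1 n i; lia. Qed.

Lemma essential_by_subS n : essential_by n \subset essential_by n.+1.
Proof.
apply/subsetP => i; rewrite !mem_essential_by => /le_trans; apply.
exact: gamma_le_succ.
Qed.

Lemma essential_by_stall n :
  essential_by n = essential_by n.+1 -> essential_by n.+1 = essential_by n.+2.
Proof.
move=> stall; apply/setP => i; apply/idP/idP.
  exact: (subsetP (essential_by_subS _)).
apply: contraLR; rewrite -!gamma_eq1E => /eqP gamma1; apply/eqP.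
apply: meval_eq1 (SNRE_nonneg i) (gamma_ege1 n) _ gamma1 => j /eqP.
by rewrite gamma_eq1E stall -gamma_eq1E => /eqP.
Qed.

Lemma essential_by_minn n : essential_by (minn n k) = essential_by n.
Proof.
case: leqP => // /ltnW le_kn.
by rewrite (chain_stationary essential_by_subS essential_by_stall (m := n)) card_ord.
Qed.

End SNRE.

Theorem theorem2 (d k : nat) (F : 'I_k -> {mpoly int[k]}) :
  is_SNRE d F ->
  forall i : 'I_k,
    (essential F i <-> exists2 n : nat, (n <= k)%N & 2 <= gamma F n i) /\
    (inessential F i <-> forall n : nat, (n <= k)%N -> gamma F n i = 1).
Proof.
move=> F_SNRE i; have ess_minn := essential_by_minn F_SNRE.
have mem_ess := mem_essential_by F_SNRE.
split; split.
- case=> n; rewrite -mem_ess -ess_minn mem_ess => ess_i.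
  by exists (minn n k); first exact: geq_minr.
- by case=> n _; exists n.
- by move=> ness_i n _.
- move=> ness_i n; apply/eqP; rewrite gamma_eq1E -ess_minn -gamma_eq1E.
  by apply/eqP/ness_i; exact: geq_minr.
Qed.
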